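(* (1) For every LTL formula $\varphi$ in PNF and every $x\in\Sigma$, $\partial_x(\varphi)\subseteq\mathrm{SET}(\partial^+(\varphi))$. (2) For all $\varphi'\in\partial^+(\varphi)$ and $x\in\Sigma$, $\partial_x(\varphi')\subseteq\mathrm{SET}(\partial^+(\varphi))$.
   Context: LTL formulae in PNF: $\varphi,\psi ::= p \mid \neg p \mid \mathbf{tt} \mid \mathbf{ff} \mid \varphi\wedge\psi \mid \varphi\vee\psi \mid \bigcirc\varphi \mid \varphi\,\mathcal{U}\,\psi \mid \varphi\,\mathcal{R}\,\psi$, over words in $\Sigma^\omega$ with an interpretation $I:\Sigma\to\mathcal{P}(AP)$. Temporal formula: does not start with $\wedge$ or $\vee$. Monomials $\mu,\nu$: $\mathbf{ff}$ or consistent sets of literals; $x\models\mu$ means all literals of $\mu$ hold under $I(x)$; $\mu\sqcap\nu$ is $\mathbf{ff}$ if either is $\mathbf{ff}$ or $\mu\cup\nu$ is contradictory, else $\mu\cup\nu$. $\varphi\,\dot\wedge\,\psi$: formal conjunction, normalized modulo associativity, commutativity, idempotence ($\mathbf{tt}$ = empty formal conjunction). $\mathrm{simp}(\varphi\wedge\psi)=\{\varphi'\,\dot\wedge\,\psi'\mid\varphi'\in\mathrm{simp}(\varphi),\psi'\in\mathrm{simp}(\psi)\}$, $\mathrm{simp}(\varphi\vee\psi)=\mathrm{simp}(\varphi)\cup\mathrm{simp}(\psi)$, $\mathrm{simp}(\varphi)=\{\varphi\}$ for temporal $\varphi$. Linear factors: $\mathrm{LF}(\ell)=\{\langle\{\ell\},\mathbf{tt}\rangle\}$,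 $\mathrm{LF}(\mathbf{tt})=\{\langle\mathbf{tt},\mathbf{tt}\rangle\}$, $\mathrm{LF}(\mathbf{ff})=\{\}$, $\mathrm{LF}(\varphi\vee\psi)=\mathrm{LF}(\varphi)\cup\mathrm{LF}(\psi)$, $\mathrm{LF}(\varphi\wedge\psi)=\{\langle\mu\sqcap\nu,\varphi'\,\dot\wedge\,\psi'\rangle\mid\langle\mu,\varphi'\rangle\in\mathrm{LF}(\varphi),\langle\nu,\psi'\rangle\in\mathrm{LF}(\psi),\mu\sqcap\nu\neq\mathbf{ff}\}$, $\mathrm{LF}(\bigcirc\varphi)=\{\langle\mathbf{tt},\varphi'\rangle\mid\varphi'\in\mathrm{simp}(\varphi)\}$, $\mathrm{LF}(\varphi\,\mathcal{U}\,\psi)=\mathrm{LF}(\psi)\cup\{\langle\mu,\varphi'\,\dot\wedge\,(\varphi\,\mathcal{U}\,\psi)\rangle\mid\langle\mu,\varphi'\rangle\in\mathrm{LF}(\varphi)\}$, $\mathrm{LF}(\varphi\,\mathcal{R}\,\psi)=\{\langle\mu\sqcap\nu,\varphi'\,\dot\wedge\,\psi'\rangle\mid\langle\mu,\varphi'\rangle\in\mathrm{LF}(\varphi),\langle\nu,\psi'\rangle\in\mathrm{LF}(\psi),\mu\sqcap\nu\neq\mathbf{ff}\}\cup\{\langle\nu,\psi'\,\dot\wedge\,(\varphi\,\mathcal{R}\,\psi)\rangle\mid\langle\nu,\psi'\rangle\in\mathrm{LF}(\psi)\}$. Partial derivatives: $\partial_x(\varphi)=\{\varphi'\mid\langle\mu,\varphi'\rangle\in\mathrm{LF}(\varphi),x\models\mu\}$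 for temporal $\varphi$, $\partial_x(\mathbf{tt})=\{\mathbf{tt}\}$, $\partial_x(\varphi\,\dot\wedge\,\psi)=\{\varphi'\,\dot\wedge\,\psi'\mid\varphi'\in\partial_x(\varphi),\psi'\in\partial_x(\psi)\}$. Iterated partial derivatives: $\partial^+(\ell)=\{\ell\}$, $\partial^+(\mathbf{tt})=\{\mathbf{tt}\}$, $\partial^+(\mathbf{ff})=\{\mathbf{ff}\}$, $\partial^+(\varphi\vee\psi)=\partial^+(\varphi\wedge\psi)=\partial^+(\varphi)\cup\partial^+(\psi)$, $\partial^+(\bigcirc\varphi)=\{\bigcirc\varphi\}\cup\partial^+(\varphi)$, $\partial^+(\varphi\,\mathcal{U}\,\psi)=\{\varphi\,\mathcal{U}\,\psi\}\cup\partial^+(\varphi)\cup\partial^+(\psi)$, $\partial^+(\varphi\,\mathcal{R}\,\psi)=\{\varphi\,\mathcal{R}\,\psi\}\cup\partial^+(\varphi)\cup\partial^+(\psi)$. For an ordered set $X=\{x_1,x_2,\dots\}$, $\mathrm{SET}(X)=\{\mathbf{tt}\}\cup\{x_{i_1}\,\dot\wedge\,\cdots\,\dot\wedge\,x_{i_n}\mid n\ge1,i_1<\dots<i_n\}$. *)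

From Stdlib Require Import List.
Import ListNotations.
Set Implicit Arguments.

Section LTL.
Variable AP : Type.

Inductive formula : Type :=
| Pos : AP -> formula
| Neg : AP -> formula
| Tt : formula
| Ff : formula
| And : formula -> formula -> formula
| Or : formula -> formula -> formula
| Next : formula -> formula
| Until : formula -> formula -> formula
| Release : formula -> formula -> formula.

(* A literal: (p, true) is p, (p, false) is ~p. *)
Definition literal := (AP * bool)%type.

(* A non-ff monomial: a finite set (list) of literals; [] is tt. *)
Definition monomial := list literal.

Definition consistent (m : monomial) : Prop :=
  ~ (exists p, In (p, true) m /\ In (p, false) m).

(* Formal conjunction of temporal formulae, represented by a list; two
   lists denote the same formal conjunction iff they have the same
   elements (normalization modulo associativity, commutativity,
   idempotence). tt is the empty formal conjunction. *)
Definition fconj := list formula.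

Definition fconj_eq (c1 c2 : fconj) : Prop := forall y, In y c1 <-> In y c2.

Definition embed (phi : formula) : fconj :=
  match phi with Tt => [] | _ => [phi] end.

Definition fand (c1 c2 : fconj) : fconj := c1 ++ c2.

Fixpoint simp (phi : formula) : fconj -> Prop :=
  match phi with
  | And a b => fun c => exists c1 c2, simp a c1 /\ simp b c2 /\ c = fand c1 c2
  | Or a b => fun c => simp a c \/ simp b c
  | _ => fun c => c = embed phi
  end.

(* Linear factors: LF phi m c  <->  <m, c> in LF(phi).  Monomials in
   linear factors are never ff; mu meet nu <> ff iff their union is
   consistent, in which case the meet is the union. *)
Fixpoint LF (phi : formula) : monomial -> fconj -> Prop :=
  match phi with
  | Pos p => fun m c => m = [(p, true)] /\ c = []
  | Neg p => fun m c => m = [(p, false)] /\ c = []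
  | Tt => fun m c => m = [] /\ c = []
  | Ff => fun _ _ => False
  | Or a b => fun m c => LF a m c \/ LF b m c
  | And a b => fun m c =>
      exists m1 c1 m2 c2, LF a m1 c1 /\ LF b m2 c2 /\
        consistent (m1 ++ m2) /\ m = m1 ++ m2 /\ c = fand c1 c2
  | Next a => fun m c => m = [] /\ simp a c
  | Until a b => fun m c =>
      LF b m c \/
      exists c1, LF a m c1 /\ c = fand c1 (embed (Until a b))
  | Release a b => fun m c =>
      (exists m1 c1 m2 c2, LF a m1 c1 /\ LF b m2 c2 /\
         consistent (m1 ++ m2) /\ m = m1 ++ m2 /\ c = fand c1 c2)
      \/ exists c2, LF b m c2 /\ c = fand c2 (embed (Release a b))
  end.

Variable Sigma : Type.
Variable I : Sigma -> AP -> Prop.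

Definition sat (x : Sigma) (m : monomial) : Prop :=
  forall p b, In (p, b) m -> (if b then I x p else ~ I x p).

Definition pd (x : Sigma) (phi : formula) : fconj -> Prop :=
  fun c => exists m, LF phi m c /\ sat x m.

Fixpoint dplus (phi : formula) : formula -> Prop :=
  match phi with
  | Pos _ | Neg _ | Tt | Ff => fun y => y = phi
  | And a b | Or a b => fun y => dplus a y \/ dplus b y
  | Next a => fun y => y = phi \/ dplus a y
  | Until a b | Release a b => fun y => y = phi \/ dplus a y \/ dplus b y
  end.

Definition SET (X : formula -> Prop) : fconj -> Prop :=
  fun c => fconj_eq c [] \/
    exists s : list formula, s <> [] /\ (forall y, In y s -> X y) /\
      fconj_eq c (concat (map embed s)).

End LTL.

(** Every conjunct produced by a linear factor of [phi] lies in the iterated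
    derivatives [dplus phi]: [LF] only recombines the conjuncts of the
    subformulae and re-adds the [U]/[R] formula being unfolded, and [simp]
    only splits [And]/[Or]. So each derivative is a formal conjunction of
    elements of [dplus phi], whatever the monomial. Part (2) follows since
    [dplus] is transitive. *)

From Stdlib Require Import List.
Import ListNotations.

Section Conjuncts.
Context {AP : Type}.
Implicit Types (X Y : formula AP -> Prop) (phi : formula AP) (c : fconj AP).

(* Excluding [Tt] makes [c] its own witness in [SET], as [embed] is then
   the singleton map. *)
Definition conjuncts_in X c : Prop := forall y, In y c -> y <> Tt AP /\ X y.

Lemma conjuncts_in_nil X : conjuncts_in X [].
Proof. intros y []. Qed.

Lemma conjuncts_in_embed X phi : X phi -> conjuncts_in X (embed phi).
Proof.
  intros Hphi y Hy; destruct phi; simpl in Hy;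
    try destruct Hy as [<- | []]; easy.
Qed.

Lemma conjuncts_in_fand X c1 c2 :
  conjuncts_in X c1 -> conjuncts_in X c2 -> conjuncts_in X (fand c1 c2).
Proof. intros H1 H2 y Hy; apply in_app_or in Hy as [Hy | Hy]; auto. Qed.

Lemma conjuncts_in_mono {X Y c} :
  conjuncts_in X c -> (forall y, X y -> Y y) -> conjuncts_in Y c.
Proof. intros H HXY y Hy; destruct (H y Hy); auto. Qed.

Lemma concat_embed_id c :
  (forall y, In y c -> y <> Tt AP) -> concat (map (@embed AP) c) = c.
Proof.
  induction c as [| f c IH]; intros H; simpl; [reflexivity |].
  rewrite IH by (intros y Hy; apply H; now right).
  specialize (H f (or_introl eq_refl)); destruct f; easy.
Qed.

Lemma SET_of_conjuncts_in {X c} : conjuncts_in X c -> SET X c.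
Proof.
  intros H; destruct c as [| f c].
  - left; intros y; reflexivity.
  - right; exists (f :: c); split; [discriminate | split].
    + intros y Hy; apply (H y Hy).
    + rewrite concat_embed_id; [intros y; reflexivity |].
      intros y Hy; apply (H y Hy).
Qed.

Lemma SET_mono {X Y c} : SET X c -> (forall y, X y -> Y y) -> SET Y c.
Proof.
  intros [H | (s & Hs & HX & Heq)] HXY; [now left | right].
  exists s; auto.
Qed.

Lemma dplus_trans {phi psi chi} :
  dplus phi psi -> dplus psi chi -> dplus phi chi.
Proof.
  revert psi; induction phi; simpl; intros psi H1 H2;
    try (subst psi; exact H2);
    intuition (subst; eauto).
Qed.

Local Ltac weaken_by H := apply (conjuncts_in_mono H); simpl; auto.

Lemma simp_conjuncts_in {phi c} : simp phi c -> conjuncts_in (dplus phi) c.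
Proof.
  revert c; induction phi; intros c Hs; cbn [simp] in Hs;
    try (subst c; apply conjuncts_in_embed; simpl; auto; fail).
  - destruct Hs as (c1 & c2 & H1 & H2 & ->).
    apply conjuncts_in_fand; [weaken_by (IHphi1 _ H1) | weaken_by (IHphi2 _ H2)].
  - destruct Hs as [Hs | Hs]; [weaken_by (IHphi1 _ Hs) | weaken_by (IHphi2 _ Hs)].
Qed.

Lemma LF_conjuncts_in {phi} {m : monomial AP} {c} :
  LF phi m c -> conjuncts_in (dplus phi) c.
Proof.
  revert m c; induction phi; intros m c Hl; cbn [LF] in Hl.
  1-3: destruct Hl as [_ ->]; apply conjuncts_in_nil.
  - contradiction.
  - destruct Hl as (m1 & c1 & m2 & c2 & H1 & H2 & _ & _ & ->).
    apply conjuncts_in_fand; [weaken_by (IHphi1 _ _ H1) | weaken_by (IHphi2 _ _ H2)].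
  - destruct Hl as [Hl | Hl]; [weaken_by (IHphi1 _ _ Hl) | weaken_by (IHphi2 _ _ Hl)].
  - destruct Hl as [_ Hs]; weaken_by (simp_conjuncts_in Hs).
  - destruct Hl as [Hl | (c1 & Hl & ->)]; [weaken_by (IHphi2 _ _ Hl) |].
    apply conjuncts_in_fand; [weaken_by (IHphi1 _ _ Hl) |].
    apply conjuncts_in_embed; simpl; auto.
  - destruct Hl as [(m1 & c1 & m2 & c2 & H1 & H2 & _ & _ & ->) | (c2 & Hl & ->)].
    + apply conjuncts_in_fand; [weaken_by (IHphi1 _ _ H1) | weaken_by (IHphi2 _ _ H2)].
    + apply conjuncts_in_fand; [weaken_by (IHphi2 _ _ Hl) |].
      apply conjuncts_in_embed; simpl; auto.
Qed.

Lemma pd_in_SET_dplus {Sigma : Type} {I : Sigma -> AP -> Prop} {x phi c} :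
  pd I x phi c -> SET (dplus phi) c.
Proof. intros (m & Hl & _); exact (SET_of_conjuncts_in (LF_conjuncts_in Hl)). Qed.

End Conjuncts.

Theorem lemma7 (AP Sigma : Type) (I : Sigma -> AP -> Prop) (phi : formula AP) :
  (forall (x : Sigma) (c : fconj AP), pd I x phi c -> SET (dplus phi) c) /\
  (forall (phi' : formula AP), dplus phi phi' ->
     forall (x : Sigma) (c : fconj AP), pd I x phi' c -> SET (dplus phi) c).
Proof.
  split.
  - intros x c; apply pd_in_SET_dplus.
  - intros phi' Hphi' x c Hpd.
    apply (SET_mono (pd_in_SET_dplus Hpd)).
    intros y Hy; exact (dplus_trans Hphi' Hy).
Qed.
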